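(* Let $q$ be a power of an odd prime $p\neq 3$ with $3\mid q-1$, let $\tau\in\mathbb{F}_q\setminus\{0,1/4,-1/50\}$, and let $\mathfrak{C}/\mathbb{F}_q$ be the genus $2$ curve $y^2=x^6+x^3+\tau$ with function field $F$ and $N=\#\mathbb{P}^1_F$ rational places. Then for all integers $t,\ell$ with $1\le t<\ell\le\lfloor N/3\rfloor-1$ there exists a $q$-ary linear locally repairable code with locality $2$ and parameters $$[\,n=3\ell,\ k=2t+1,\ d\ge n-3t-1\,]_q$$ whose Singleton-optimal defect is at most $1$.
   Context: $\mathbb{P}^1_F$ is the set of rational (degree one) places of the function field $F=\mathbb{F}_q(x,y)$. A code $\mathcal{C}\subseteq\mathbb{F}_q^n$ has locality $r$ if for every coordinate $i$ there is a set $I_i\subseteq\{1,\dots,n\}\setminus\{i\}$ with $|I_i|=r$ such that for $a\ne a'$ in $\mathbb{F}_q$ the restrictions to $I_i$ of $\{c\in\mathcal{C}:c_i=a\}$ and $\{c\in\mathcal{C}:c_i=a'\}$ are disjoint. For an $[n,k,d]_q$ code with locality $r$ the Singleton-optimal defect is $\Delta=n-k-\lceil k/r\rceil+2-d\ge0$; optimal means $\Delta=0$, almost optimal means $\Delta=1$. *)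

From HB Require Import structures.
From mathcomp Require Import all_boot all_order all_algebra all_field.
Set Implicit Arguments. Unset Strict Implicit. Unset Printing Implicit Defensive.
Import Order.TTheory GRing.Theory Num.Theory.
Local Open Scope ring_scope.

Definition wt (F : fieldType) (n : nat) (v : 'rV[F]_n) : nat :=
  #|[set i : 'I_n | v 0 i != 0]|.

Definition is_min_dist (F : fieldType) (n : nat) (C : {vspace 'rV[F]_n}) (d : nat) : Prop :=
  (exists2 c, c \in C & c != 0 /\ wt c = d) /\
  (forall c, c \in C -> c != 0 -> (d <= wt c)%N).

Definition has_locality (F : fieldType) (n : nat) (C : {vspace 'rV[F]_n}) (r : nat) : Prop :=
  forall i : 'I_n, exists I : {set 'I_n},
    [/\ i \notin I, #|I| = r &
      forall a a' : F, a != a' ->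
        forall c c', c \in C -> c' \in C -> c 0 i = a -> c' 0 i = a' ->
          ~ (forall j, j \in I -> c 0 j = c' 0 j)].

Definition ceil_div (k r : nat) : nat := ((k + r.-1) %/ r)%N.

Definition lrc_defect (n k d r : nat) : int :=
  (n%:Z - k%:Z - (ceil_div k r)%:Z + 2 - d%:Z)%R.

(* The affine model is smooth (f = x^6+x^3+tau is squarefree for p <> 2,3 and
   tau <> 0, 1/4), so each affine F_q-point gives exactly one rational place;
   since deg f = 6 is even with square leading coefficient 1, there are exactly
   two rational places at infinity. *)
Definition num_rat_places (F : finFieldType) (tau : F) : nat :=
  (#|[set xy : F * F | (xy.2 ^+ 2 == xy.1 ^+ 6 + xy.1 ^+ 3 + tau)%R]| + 2)%N.

From HB Require Import structures.
From mathcomp Require Import all_boot all_order all_algebra all_field.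
From mathcomp Require Import cyclic zify ring.
Set Implicit Arguments. Unset Strict Implicit. Unset Printing Implicit Defensive.
Import Order.TTheory GRing.Theory Num.Theory.
Local Open Scope ring_scope.

(* With c = tau - 1/4, the substitution u = y + x^3 + 1/2 maps the affine points
   of y^2 = x^6 + x^3 + tau injectively to the points of 2 u x^3 = u^2 - u - c
   with u <> 0.  All but at most two of these lie in triples (u, x), (u, w x),
   (u, w^2 x), w a primitive cube root of unity, so there are at least l such
   triples.  Evaluate the functions a(u) + x u b(u), with deg a <= t and
   deg b < t, at the points of l triples.  On a triple such a function is affine
   in x, so any two of its values determine the third: this gives locality 2.
   The norm 2 a^3 + (u^2 - u - c) u^2 b^3 of the function along a triple is a
   nonzero polynomial of degree at most 3t + 1, because its two summands have
   degrees in different classes mod 3; it vanishes to order 3 at the u where a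
   and b both vanish and to order at least 1 at every other u carrying a zero,
   so a nonzero codeword has at most 3t + 1 zeros. *)

Lemma sum_mup_lt_size (F : fieldType) (q : {poly F}) (s : seq F) :
  q != 0 -> uniq s -> (\sum_(z <- s) mup z q < size q)%N.
Proof.
elim: s q => [|z s IHs] q qN0 /=; first by rewrite big_nil size_poly_gt0.
case/andP=> zNs Us; rewrite big_cons.
have [m [r]] := multiplicity_XsubC q z; rewrite qN0 /= => rNz def_q.
have rN0 : r != 0 by apply: contraNneq rNz => ->; rewrite root0.
have XzmN0 : ('X - z%:P) ^+ m != 0 by rewrite expf_neq0 ?polyXsubC_eq0.
have -> : mup z q = m by rewrite def_q mupMr // mup_XsubCX eqxx.
have -> : (\sum_(y <- s) mup y q = \sum_(y <- s) mup y r)%N.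
  rewrite !big_seq; apply: eq_bigr => y ys.
  rewrite def_q mupM // mup_XsubCX.
  by case: eqP => [zy | _]; [move: zNs; rewrite zy ys | rewrite addn0].
have := IHs r rN0 Us.
by rewrite def_q size_Mmonic ?monic_exp ?monicXsubC // size_exp_XsubC; lia.
Qed.

Lemma card_roots_lt_size (F : finFieldType) (p : {poly F}) :
  p != 0 -> (#|[set z | root p z]| < size p)%N.
Proof.
move=> pN0; rewrite cardE; apply: max_poly_roots => //; last exact: enum_uniq.
by apply/allP => z; rewrite mem_enum inE.
Qed.

Lemma scale_cube_add_mul_cube_neq0 (R : idomainType) (d : R) (g a b : {poly R}) :
  ~~ (3 %| (size g).-1)%N -> d != 0 -> (a != 0) || (b != 0) ->
  d *: a ^+ 3 + g * b ^+ 3 != 0.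
Proof.
move=> g3 dN0 abN0; have gN0 : g != 0 by apply: contraNneq g3 => ->; rewrite size_poly0.
apply/eqP => /eqP; rewrite addr_eq0 => /eqP E.
have [a0 | aN0] := eqVneq a 0.
  move: E; rewrite a0 expr0n scaler0 => /eqP; rewrite eq_sym oppr_eq0.
  rewrite mulf_eq0 (negbTE gN0) expf_eq0 /= => /eqP b0.
  by move: abN0; rewrite a0 b0 eqxx.
have [b0 | bN0] := eqVneq b 0.
  move: E; rewrite b0 expr0n /= mulr0 oppr0 => /eqP.
  by rewrite scale_poly_eq0 (negbTE dN0) expf_eq0 (negbTE aN0) andbF.
move/(congr1 (fun p : {poly R} => (size p).-1)): E.
rewrite size_polyN size_scale // size_exp size_mul ?expf_neq0 //.
have := size_exp b 3; have := size_poly_gt0 g; have := size_poly_gt0 (b ^+ 3).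
rewrite gN0 expf_neq0 //; move: g3; lia.
Qed.

Lemma affine_eq0_of_two_zeros (R : idomainType) (A B x1 x2 : R) :
  x1 != x2 -> A + x1 * B = 0 -> A + x2 * B = 0 -> A = 0 /\ B = 0.
Proof.
move=> x12 z1 z2.
have : (x1 - x2) * B = (A + x1 * B) - (A + x2 * B) by ring.
rewrite z1 z2 subrr => /eqP; rewrite mulf_eq0 subr_eq0 (negbTE x12) /= => /eqP B0.
by split => //; move: z1; rewrite B0 mulr0 addr0.
Qed.

Lemma finField_prim_root (F : finFieldType) (m : nat) :
  (m %| #|F|.-1)%N -> exists w : F, m.-primitive_root w.
Proof.
move=> m_dvd; have F_gt1 : (1 < #|F|)%N := card_finNzRing_gt1 F.
have n_gt0 : (0 < #|F|.-1)%N by lia.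
have units1 : all #|F|.-1.-unity_root (enum (predC1 (0 : F))).
  apply/allP => z; rewrite mem_enum /= => zN0; rewrite unity_rootE.
  have := expf_card z; rewrite -(ltn_predK F_gt1) exprS => zq.
  by apply/eqP/(mulfI zN0); rewrite zq mulr1.
have := has_prim_root n_gt0 units1 (enum_uniq _).
rewrite -cardE cardC1 leqnn => /(_ isT) /hasP[w _ w_prim].
by exists (w ^+ (#|F|.-1 %/ m)); apply: dvdn_prim_root.
Qed.

Lemma card_pairs (T1 T2 : finType) (A : {set T1 * T2}) :
  #|A| = (\sum_(u : T1) #|[set x | (u, x) \in A]|)%N.
Proof.
rewrite -sum1_card; under [RHS]eq_bigr do rewrite -sum1_card.
by rewrite pair_big_dep; apply: eq_bigl => -[u x]; rewrite inE.
Qed.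

Section Curve.

Variables (F : finFieldType) (c : F).
Hypothesis two_neq0 : 2%:R != 0 :> F.

Definition kpoly : {poly F} := 'X^2 - 'X - c%:P.

Definition on_curve (u x : F) := (u != 0) && (2%:R * u * x ^+ 3 == kpoly.[u]).

Definition full_fiber (u : F) := [exists x, on_curve u x && (x != 0)].

(* If 2 u x^3 = kpoly(u) and w is a primitive cube root of unity, then
   (curve_norm a b).[u] = 2 (A + x B) (A + w x B) (A + w^2 x B)
   with A = a(u) and B = u b(u). *)
Definition curve_norm (a b : {poly F}) : {poly F} :=
  2%:R *: a ^+ 3 + kpoly * 'X^2 * b ^+ 3.

Lemma kpolyE u : kpoly.[u] = u ^+ 2 - u - c.
Proof. by rewrite !hornerE. Qed.

Lemma size_kpoly : size kpoly = 3%N.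
Proof.
rewrite /kpoly -addrA size_polyDl size_polyXn //.
apply: leq_ltn_trans (size_polyD _ _) _; rewrite size_polyN size_polyX.
by rewrite gtn_max /= size_polyN (leq_ltn_trans (size_polyC_leq1 _)).
Qed.

Lemma kpoly_neq0 : kpoly != 0.
Proof. by rewrite -size_poly_eq0 size_kpoly. Qed.

Lemma card_curve_fiber u : (#|[set x | on_curve u x]| <= 3)%N.
Proof.
have [-> | uN0] := eqVneq u 0.
  by rewrite (_ : [set x | _] = set0) ?cards0 //; apply/setP => x; rewrite !inE /on_curve eqxx.
pose cubic := (2%:R * u) *: 'X^3 - kpoly.[u]%:P.
have size_cubic : size cubic = 4%N.
  rewrite size_polyDl size_scale ?size_polyXn ?mulf_neq0 //.
  by rewrite size_polyN (leq_ltn_trans (size_polyC_leq1 _)).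
have cubicN0 : cubic != 0 by rewrite -size_poly_eq0 size_cubic.
rewrite -ltnS -size_cubic; apply: leq_ltn_trans (card_roots_lt_size cubicN0).
apply/subset_leq_card/subsetP => x; rewrite !inE => /andP[_ /eqP curve_x].
by rewrite /root /cubic hornerD hornerN hornerZ hornerXn hornerC curve_x subrr.
Qed.

Lemma curve_norm_root a b u x :
  on_curve u x -> a.[u] + x * u * b.[u] = 0 -> root (curve_norm a b) u.
Proof.
case/andP=> _ /eqP curve_x /eqP; rewrite addr_eq0 => /eqP a_u.
rewrite /root /curve_norm hornerD hornerZ !hornerM hornerX -curve_x a_u.
apply/eqP; ring.
Qed.

Lemma curve_norm_neq0 a b : (a != 0) || (b != 0) -> curve_norm a b != 0.
Proof.
apply: scale_cube_add_mul_cube_neq0 => //.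
by rewrite size_mul ?kpoly_neq0 ?monic_neq0 ?monicXn // size_kpoly size_polyXn.
Qed.

Lemma size_curve_norm t (a b : {poly F}) :
  (size a <= t.+1)%N -> (size b <= t)%N -> (size (curve_norm a b) <= (3 * t).+2)%N.
Proof.
move=> size_a size_b; apply: leq_trans (size_polyD _ _) _; rewrite geq_max; apply/andP; split.
  apply: leq_trans (size_scale_leq _ _) _; apply: leq_trans (size_poly_exp_leq _ _) _.
  by move: size_a; lia.
have [-> | bN0] := eqVneq b 0; first by rewrite expr0n /= mulr0 size_poly0.
have kX2N0 : kpoly * 'X^2 != 0 by rewrite mulf_neq0 ?kpoly_neq0 ?monic_neq0 ?monicXn.
rewrite size_mul ?expf_neq0 // size_Mmonic ?kpoly_neq0 ?monicXn // size_kpoly size_polyXn.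
have b_pos : (0 < size b)%N by rewrite size_poly_gt0.
have := size_poly_exp_leq b 3; move: size_b b_pos.
by move: (size b) (size (b ^+ 3)); lia.
Qed.

Lemma card_curve_zeros_fiber (a b : {poly F}) u : (a != 0) || (b != 0) ->
  (#|[set x | on_curve u x && (a.[u] + x * u * b.[u] == 0)%R]| <= mup u (curve_norm a b))%N.
Proof.
move=> abN0; have normN0 := curve_norm_neq0 abN0.
set Z := [set x | _].
have [ab_u | ab_uN0] := boolP ((a.[u] == 0) && (b.[u] == 0)).
  have XsubC_dvd p : p.[u] == 0 -> ('X - u%:P) ^+ 3 %| p ^+ 3.
    by move=> p_u; rewrite dvdp_exp2r // dvdp_XsubCl.
  case/andP: ab_u => /XsubC_dvd a_dvd /XsubC_dvd b_dvd.
  have : (3 <= mup u (curve_norm a b))%N.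
    by rewrite mup_geq //; apply: dvdp_add; [rewrite dvdpZr | apply: dvdp_mull].
  apply: leq_trans; apply: leq_trans (card_curve_fiber u).
  by apply/subset_leq_card/subsetP => x; rewrite !inE => /andP[].
have Z_le1 : (#|Z| <= 1)%N.
  apply/card_le1P => x1 Zx1 x2; rewrite !inE in Zx1 *; apply/idP/eqP => [Zx2 | -> //].
  apply/eqP/negPn/negP => x12.
  case/andP: Zx1 => /andP[uN0 _] /eqP Zx1; case/andP: Zx2 => _ /eqP Zx2.
  rewrite -!mulrA in Zx1 Zx2; have [a_u ub_u] := affine_eq0_of_two_zeros x12 Zx2 Zx1.
  by move/eqP: ub_u ab_uN0; rewrite a_u eqxx mulf_eq0 (negbTE uN0) /= => ->.
case: (set_0Vmem Z) => [-> | [x Zx]]; first by rewrite cards0.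
apply: leq_trans Z_le1 _; rewrite -XsubC_dvd // dvdp_XsubCl.
by move: Zx; rewrite inE => /andP[curve_x /eqP]; apply: curve_norm_root.
Qed.

Lemma card_curve_zeros t (a b : {poly F}) :
  (size a <= t.+1)%N -> (size b <= t)%N -> (a != 0) || (b != 0) ->
  (#|[set p : F * F | on_curve p.1 p.2 && (a.[p.1] + p.2 * p.1 * b.[p.1] == 0)%R]|
     <= (3 * t).+1)%N.
Proof.
move=> size_a size_b abN0.
rewrite -ltnS; apply: leq_trans (size_curve_norm size_a size_b).
rewrite card_pairs; apply: leq_trans (sum_mup_lt_size _ (enum_uniq F)).
  rewrite big_enum /=; apply: leq_sum => u _.
  apply: leq_trans (card_curve_zeros_fiber u abN0).
  by apply/subset_leq_card/subsetP => x; rewrite !inE.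
exact: curve_norm_neq0.
Qed.

Lemma card_curve_le :
  (#|[set p : F * F | on_curve p.1 p.2]| <= 3 * #|[set u | full_fiber u]| + 2)%N.
Proof.
set good := [set u | full_fiber u].
have sub : [set p : F * F | on_curve p.1 p.2] \subset
    [set p | (p.1 \in good) && on_curve p.1 p.2] :|: setX [set u | root kpoly u] [set 0].
  apply/subsetP => -[u x]; rewrite !inE /= => curve_x.
  have [x0 | xN0] := eqVneq x 0.
    move: curve_x; rewrite x0 /on_curve expr0n /= mulr0 andbT => /andP[_ /eqP k_u].
    by rewrite /root -k_u eqxx orbT.
  by rewrite andbF orbF curve_x andbT; apply/existsP; exists x; rewrite curve_x.
apply: leq_trans (subset_leq_card sub) _; apply: leq_trans (leq_card_setU _ _) _.
rewrite cardsX cards1 muln1; apply: leq_add.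
  rewrite card_pairs (bigID (mem good)) /= addnC big1 ?add0n => [|u u_bad]; last first.
    by apply/eqP; rewrite cards_eq0; apply/eqP/setP => x; move: u_bad; rewrite !inE => /negbTE ->.
  rewrite mulnC -sum_nat_const; apply: leq_sum => u _; apply: leq_trans (card_curve_fiber u).
  by apply/subset_leq_card/subsetP => x; rewrite !inE => /andP[].
by rewrite -ltnS -size_kpoly card_roots_lt_size ?kpoly_neq0.
Qed.

End Curve.

Lemma card_affine_le_curve (F : finFieldType) (tau : F) :
  2%:R != 0 :> F -> tau != 4%:R^-1 ->
  (#|[set xy : F * F | (xy.2 ^+ 2 == xy.1 ^+ 6 + xy.1 ^+ 3 + tau)%R]|
     <= #|[set p : F * F | on_curve (tau - 4%:R^-1)%R p.1 p.2]|)%N.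
Proof.
move=> two_neq0 tau4.
have four_neq0 : 4%:R != 0 :> F by rewrite (natrM _ 2 2) mulf_neq0.
pose phi (xy : F * F) := (xy.2 + xy.1 ^+ 3 + 2%:R^-1, xy.1).
have phi_inj : injective phi.
  by move=> [x y] [x' y'] [+ xx']; rewrite /= -xx' => /(addIr _)/(addIr _) ->.
rewrite -(card_imset _ phi_inj); apply/subset_leq_card/subsetP => _ /imsetP[[x y] + ->].
rewrite !inE /= => /eqP curve_xy; set u := y + x ^+ 3 + 2%:R^-1.
have u_curve : 2%:R * u * x ^+ 3 = u ^+ 2 - u - (tau - 4%:R^-1).
  have -> : tau = y ^+ 2 - x ^+ 6 - x ^+ 3 by rewrite curve_xy; ring.
  by rewrite /u; field; rewrite four_neq0 two_neq0.
rewrite /on_curve kpolyE u_curve eqxx andbT.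
apply: contra tau4 => /eqP u0; move: u_curve; rewrite u0 mulr0 mul0r expr0n /= subrr sub0r => /eqP.
by rewrite eq_sym oppr_eq0 subr_eq0.
Qed.

Lemma wt_add_card_zeros (F : fieldType) (n : nat) (v : 'rV[F]_n) :
  (wt v + #|[set i | (v 0 i == 0)%R]|)%N = n.
Proof.
rewrite /wt -[RHS](card_ord n) -(cardsC [set i | v 0 i != 0]); congr (_ + _)%N.
by apply: eq_card => i; rewrite !inE negbK.
Qed.

Lemma min_dist_exists (F : finFieldType) (n : nat) (C : {vspace 'rV[F]_n}) :
  (0 < \dim C)%N -> exists d, is_min_dist C d.
Proof.
move=> dimC; pose P d := [exists v, (v \in C) && (v != 0) && (wt v == d)].
have exP : exists d, P d.
  exists (wt (vpick C)); apply/existsP; exists (vpick C).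
  by rewrite memv_pick vpick0 -dimv_eq0 -lt0n dimC eqxx.
case: (ex_minnP exP) => d /existsP[v /andP[/andP[vC vN0] /eqP wt_v]] d_min.
exists d; split; first by exists v.
by move=> w wC wN0; apply: d_min; apply/existsP; exists w; rewrite wC wN0 eqxx.
Qed.

Section EvaluationCode.

Variables (F : finFieldType) (n t : nat) (u x : 'I_n -> F).

Definition eval_row (a b : {poly F}) : 'rV[F]_n :=
  \row_i (a.[u i] + x i * u i * b.[u i]).

Definition eval_mx : 'M[F]_(t.+1 + t, n) :=
  col_mx (\matrix_(k < t.+1, i < n) u i ^+ k)
         (\matrix_(k < t, i < n) (x i * u i * u i ^+ k)).

Definition eval_code : {vspace 'rV[F]_n} := limg (linfun (mulmxr eval_mx)).

Lemma mul_row_eval_mx m0 m1 : row_mx m0 m1 *m eval_mx = eval_row (rVpoly m0) (rVpoly m1).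
Proof.
apply/rowP => i; rewrite mul_row_col !mxE !horner_poly mulr_sumr.
by congr (_ + _); apply: eq_bigr => k _; rewrite !mxE valK //= mulrCA.
Qed.

Lemma eval_codeP v :
  reflect (exists a b : {poly F}, [/\ size a <= t.+1, size b <= t & v = eval_row a b])%N
          (v \in eval_code).
Proof.
apply: (iffP memv_imgP) => [[m _ ->] | [a [b [size_a size_b ->]]]].
  exists (rVpoly (lsubmx m)), (rVpoly (rsubmx m)); split; rewrite ?size_poly //.
  by rewrite lfunE /= -mul_row_eval_mx hsubmxK.
exists (row_mx (poly_rV a) (poly_rV b)); first exact: memvf.
by rewrite lfunE /= mul_row_eval_mx !poly_rV_K.
Qed.

Lemma eval_row0 : eval_row 0 0 = 0.
Proof. by apply/rowP => i; rewrite !mxE !horner0 mulr0 addr0. Qed.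

Variable c : F.
Hypothesis two_neq0 : 2%:R != 0 :> F.
Hypothesis eval_on_curve : forall i, on_curve c (u i) (x i).
Hypothesis eval_inj : injective (fun i => (u i, x i)).

Lemma card_eval_row_zeros (a b : {poly F}) :
  (size a <= t.+1)%N -> (size b <= t)%N -> (a != 0) || (b != 0) ->
  (#|[set i | (eval_row a b 0 i == 0)%R]| <= (3 * t).+1)%N.
Proof.
move=> size_a size_b abN0; rewrite -(card_imset _ eval_inj).
apply: leq_trans (card_curve_zeros c two_neq0 size_a size_b abN0).
apply/subset_leq_card/subsetP => _ /imsetP[i + ->]; rewrite !inE mxE /=.
by rewrite eval_on_curve.
Qed.

Lemma wt_eval_code v : v \in eval_code -> v != 0 -> (n - (3 * t).+1 <= wt v)%N.
Proof.
case/eval_codeP => a [b [size_a size_b ->]] vN0.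
have abN0 : (a != 0) || (b != 0).
  by apply: contraNT vN0; rewrite negb_or !negbK => /andP[/eqP-> /eqP->]; rewrite eval_row0.
rewrite -{1}(wt_add_card_zeros (eval_row a b)) leq_subLR [X in (_ <= X)%N]addnC leq_add2l.
exact: card_eval_row_zeros.
Qed.

Lemma eval_mx_free (m : 'rV_(t.+1 + t)) : ((3 * t).+1 < n)%N -> m *m eval_mx = 0 -> m = 0.
Proof.
rewrite -[m]hsubmxK mul_row_eval_mx => t_lt_n m0.
have rVpoly_eq0 (k : nat) (v : 'rV[F]_k) : rVpoly v = 0 -> v = 0.
  by move=> v0; apply: (can_inj rVpolyK); rewrite v0 linear0.
suff /norP[/negPn/eqP/rVpoly_eq0 -> /negPn/eqP/rVpoly_eq0 ->] :
    ~~ ((rVpoly (lsubmx m) != 0) || (rVpoly (rsubmx m) != 0)) by rewrite row_mx0.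
apply/negP => /(card_eval_row_zeros (size_poly _ _) (size_poly _ _)).
rewrite m0 (_ : [set i | _] = setT) ?cardsT ?card_ord; first by lia.
by apply/setP => i; rewrite !inE mxE eqxx.
Qed.

Lemma dim_eval_code : ((3 * t).+1 < n)%N -> \dim eval_code = (2 * t).+1%N.
Proof.
move=> t_lt_n; rewrite limg_dim_eq ?dimvf ?dim_matrix; first by lia.
rewrite capfv; apply/eqP/lker0P => m1 m2; rewrite !lfunE /= => eq_m.
by apply/eqP; rewrite -subr_eq0; apply/eqP/eval_mx_free; rewrite // mulmxBl eq_m subrr.
Qed.

Lemma eval_code_locality :
  (forall i, exists j1 j2, [/\ u j1 = u i, u j2 = u i & uniq [:: i; j1; j2]]) ->
  has_locality eval_code 2.
Proof.
move=> triples i; have [j1 [j2 [u_j1 u_j2 /and3P[]]]] := triples i.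
rewrite !inE negb_or => /andP[ij1 ij2]; rewrite andbT => j12 _.
exists [set j1; j2]; split; first by rewrite !inE negb_or ij1 ij2.
  by rewrite cards2 j12.
move=> a a' aa' c1 c2 c1C c2C c1_i c2_i agree.
have /eval_codeP[A [B [_ _ c12]]] : c1 - c2 \in eval_code by rewrite memvB.
have c12E j : u j = u i -> (c1 - c2) 0 j = A.[u i] + x j * (u i * B.[u i]).
  by move=> u_j; rewrite c12 mxE u_j mulrA.
have zero_at j : j \in [set j1; j2] -> A.[u i] + x j * (u i * B.[u i]) = 0.
  move=> jI; rewrite -c12E ?mxE ?agree ?subrr //.
  by case/set2P: jI => ->.
have x12 : x j1 != x j2.
  by apply: contra j12 => /eqP x12; apply/eqP/eval_inj; rewrite /= u_j1 u_j2 x12.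
have [A0 B0] := affine_eq0_of_two_zeros x12 (zero_at _ (set21 _ _)) (zero_at _ (set22 _ _)).
move/eqP: (c12E i erefl); rewrite A0 B0 mulr0 addr0 !mxE subr_eq0 c1_i c2_i.
exact/negP.
Qed.

End EvaluationCode.

Lemma curve_triples (F : finFieldType) (c w : F) (l : nat) :
  3.-primitive_root w -> (l <= #|[set u | full_fiber c u]|)%N ->
  exists u x : 'I_(3 * l) -> F,
    [/\ forall i, on_curve c (u i) (x i), injective (fun i => (u i, x i)) &
        forall i, exists j1 j2, [/\ u j1 = u i, u j2 = u i & uniq [:: i; j1; j2]]].
Proof.
move=> w_prim good_l; set us := enum [set u | full_fiber c u].
have size_us : size us = #|[set u | full_fiber c u]| by rewrite cardE.
pose x0 v := odflt 0 [pick y | on_curve c v y && (y != 0)].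
have x0P v : full_fiber c v -> on_curve c v (x0 v) && (x0 v != 0).
  by rewrite /x0; case: pickP => [y -> // | none /existsP[y]]; rewrite none.
pose u (i : 'I_(3 * l)) := nth 0 us (i %/ 3).
pose x (i : 'I_(3 * l)) := w ^+ (i %% 3) * x0 (u i).
have u_good i : full_fiber c (u i).
  have : u i \in us by apply: mem_nth; rewrite size_us; move: (ltn_ord i) good_l; lia.
  by rewrite mem_enum inE.
have w3 : w ^+ 3 = 1 := prim_expr_order w_prim.
exists u, x; split.
- move=> i; have /andP[/andP[uN0 /eqP x0_curve] _] := x0P _ (u_good i).
  by rewrite /on_curve uN0 /x exprMn -exprM mulnC exprM w3 expr1n mul1r x0_curve eqxx.
- move=> i j [u_ij]; rewrite /x u_ij => /mulIf x_ij.
  have /andP[_ x0N0] := x0P _ (u_good j).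
  move/(_ x0N0)/eqP: x_ij; rewrite (eq_prim_root_expr w_prim) !modn_mod => /eqP mod_ij.
  move/eqP: u_ij; rewrite nth_uniq ?enum_uniq ?size_us // => [/eqP div_ij | |].
  + by apply: ord_inj; lia.
  + by move: (ltn_ord i) good_l; lia.
  + by move: (ltn_ord j) good_l; lia.
- move=> i; have lt_3l k : (3 * (i %/ 3) + (i %% 3 + k) %% 3 < 3 * l)%N.
    by move: (ltn_ord i); lia.
  exists (Ordinal (lt_3l 1%N)), (Ordinal (lt_3l 2%N)).
  split; [congr nth; rewrite /=; lia | congr nth; rewrite /=; lia |].
  rewrite /= !inE !negb_or -!val_eqE /=; lia.
Qed.

Theorem mainTheorem10 (F : finFieldType) (p : nat) :
  prime p -> p \in [pchar F] -> p != 2%N -> p != 3%N ->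
  (3 %| #|F|.-1)%N ->
  forall tau : F, tau != 0 -> tau != (4%:R)^-1 -> tau != - (50%:R)^-1 ->
  forall t l : nat, (1 <= t)%N -> (t < l)%N ->
    (l <= (num_rat_places tau %/ 3).-1)%N ->
    exists C : {vspace 'rV[F]_(3 * l)},
      [/\ \dim C = (2 * t + 1)%N, has_locality C 2 &
        exists d : nat, [/\ is_min_dist C d, (3 * l - 3 * t - 1 <= d)%N &
                            lrc_defect (3 * l) (2 * t + 1) d 2 <= 1]].
Proof.
move=> p_prime p_char p_neq2 _ three_dvd tau _ tau_neq4 _ t l _ t_lt_l l_le.
have two_neq0 : 2%:R != 0 :> F.
  rewrite -(dvdn_pcharf p_char); apply: contra p_neq2 => /(dvdn_leq (isT : 0 < 2)%N).
  by have := prime_gt1 p_prime; lia.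
set c := tau - 4%:R^-1.
have good_l : (l <= #|[set u | full_fiber c u]|)%N.
  have : (num_rat_places tau <= 3 * #|[set u | full_fiber c u]| + 2 + 2)%N.
    rewrite leq_add2r; apply: leq_trans (card_curve_le c two_neq0).
    exact: card_affine_le_curve.
  by move: l_le; move: (num_rat_places tau); lia.
have [w w_prim] := finField_prim_root three_dvd.
have [u [x [ux_on_curve ux_inj triples]]] := curve_triples w_prim good_l.
have dimC : \dim (eval_code t u x) = (2 * t).+1%N.
  by apply: (dim_eval_code two_neq0 ux_on_curve ux_inj); lia.
have [d d_min] : exists d, is_min_dist (eval_code t u x) d.
  by apply: min_dist_exists; rewrite dimC.
have d_ge : (3 * l - (3 * t).+1 <= d)%N.
  by case: d_min => -[v vC [vN0 <-]] _; apply: (wt_eval_code two_neq0 ux_on_curve ux_inj).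
exists (eval_code t u x); split; first by rewrite dimC addn1.
  exact: eval_code_locality.
by exists d; split => //; [lia | rewrite /lrc_defect /ceil_div; lia].
Qed.
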